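(* Let $n$ be a positive integer and $j$ a non-negative integer. Then $$\binom{2j}{j}\sum_{k=j}^{n-1}(4k+3)\binom{k}{j}^2\equiv 0\pmod n.$$
   Context: An empty sum (when $j>n-1$) is zero. *)

From mathcomp Require Import all_boot.

From mathcomp Require Import all_boot.
From mathcomp Require Import all_algebra ring.

(** The sum factors over the integers as
      C(2j, j) * \sum_(k < n) (4k + 3) C(k, j)^2 = (j + 1) C(n, j + 1) * Q_j(n),
    where Q_j(n) = \sum_(d <= j) (-1)^(j + d) C(j + d, d) C(n, d) + 2 C(2j, j) C(n, j + 1).
    Both sides satisfy the first-order recurrence
      (n + 1) X(n + 1) - (n - j) X(n) = C(2j, j) (4n + 3) C(n, j)
    (for the alternating sum this is a telescoping sum), which gives the
    identity by induction on n; and (j + 1) C(n, j + 1) = n C(n - 1, j). *)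

Import GRing.Theory.

Section BinomialSums.

Local Open Scope ring_scope.

Lemma mul_bin_leftZ (n m : nat) :
  (m.+1 * 'C(n, m.+1))%N%:R = (n%:R - m%:R) * 'C(n, m)%:R :> int.
Proof.
have [le_mn | lt_nm] := leqP m n; first by rewrite mul_bin_left natrM natrB.
by rewrite !bin_small ?muln0 ?mulr0 // ltnW.
Qed.

Lemma mulSn_binS (n d : nat) :
  (n.+1 * 'C(n.+1, d) = (n + d).+1 * 'C(n, d) + d * 'C(n, d.-1))%N.
Proof.
case: d => [|d]; first by rewrite !bin0 addn0 mul0n addn0.
have mulSn_bin : (n.+1 * 'C(n, d) = d.+1 * 'C(n, d.+1) + d.+1 * 'C(n, d))%N.
  rewrite mul_bin_left -mulnDl.
  have [le_dn | lt_nd] := leqP d n; first by rewrite addnS subnK.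
  by rewrite bin_small ?muln0.
rewrite binS mulnDr mulSn_bin /=; ring.
Qed.

Section AlternatingSum.

Variable j : nat.

Definition alt_bin_sum (n : nat) : int :=
  \sum_(0 <= d < j.+1) (-1) ^+ (j + d) * ('C(j + d, d) * 'C(n, d))%N%:R.

Definition bin_sum_cofactor (n : nat) : int :=
  alt_bin_sum n + 2 * ('C(j.*2, j) * 'C(n, j.+1))%N%:R.

Lemma alt_bin_sum_rec (n : nat) :
  n.+1%:R * alt_bin_sum n.+1 - (n%:R - j%:R) * alt_bin_sum n
  = ((j.*2).+1 * 'C(j.*2, j) * 'C(n, j))%N%:R.
Proof.
(* Vanishes at d = 0, so the sum telescopes to f j.+1. *)
pose f d : int := (-1) ^+ (j + d).+1 * (d * 'C(j + d, d) * 'C(n, d.-1))%N%:R.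
have termE d : n.+1%:R * ((-1) ^+ (j + d) * ('C(j + d, d) * 'C(n.+1, d))%N%:R)
    - (n%:R - j%:R) * ((-1) ^+ (j + d) * ('C(j + d, d) * 'C(n, d))%N%:R)
    = f d.+1 - f d.
  have diagE : (d.+1 * 'C((j + d).+1, d.+1) = (j + d).+1 * 'C(j + d, d))%N.
    by rewrite -mul_bin_diag.
  rewrite !natrM.
  have -> : forall s c c1 c0 : int,
      n.+1%:R * (s * (c * c1)) - (n%:R - j%:R) * (s * (c * c0))
      = s * c * (n.+1%:R * c1 - (n%:R - j%:R) * c0) by move=> *; ring.
  rewrite -(natrM _ n.+1) mulSn_binS /f addnS diagE succnK.
  by rewrite !exprS !natrD !natrM !mulrS !natrD; ring.
rewrite /alt_bin_sum !mulr_sumr -sumrB (telescope_sumr_eq f) // /f.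
rewrite !mul0n mulr0 subr0 succnK addnS -mul_bin_diag addnn succnK.
by rewrite !exprS !mulN1r opprK -mul2n exprM sqrrN !expr1n mul1r.
Qed.

Lemma bin_sum_cofactor_rec (n : nat) :
  n.+1%:R * bin_sum_cofactor n.+1 - (n%:R - j%:R) * bin_sum_cofactor n
  = ('C(j.*2, j) * (4 * n + 3) * 'C(n, j))%N%:R.
Proof.
have binSE : n.+1%:R * 'C(n.+1, j.+1)%:R
    = (n + j.+1).+1%:R * 'C(n, j.+1)%:R + j.+1%:R * 'C(n, j)%:R :> int.
  by rewrite -!natrM -natrD mulSn_binS.
have := mul_bin_leftZ n j; rewrite natrM => mul_binE.
rewrite /bin_sum_cofactor !natrM.
have -> : forall a1 a0 c C1 C0 : int,
    n.+1%:R * (a1 + 2 * (c * C1)) - (n%:R - j%:R) * (a0 + 2 * (c * C0))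
    = (n.+1%:R * a1 - (n%:R - j%:R) * a0)
      + 2 * c * (n.+1%:R * C1 - (n%:R - j%:R) * C0) by move=> *; ring.
rewrite alt_bin_sum_rec binSE.
have -> : (n + j.+1).+1%:R * 'C(n, j.+1)%:R + j.+1%:R * 'C(n, j)%:R
          - (n%:R - j%:R) * 'C(n, j.+1)%:R
          = 2 * (j.+1%:R * 'C(n, j.+1)%:R) + j.+1%:R * 'C(n, j)%:R :> int.
  rewrite !mulrS natrD; ring.
rewrite mul_binE -mul2n !natrM !mulrS !natrD ?natrM; ring.
Qed.

Lemma sum_bin_sqr_factorZ (n : nat) :
  ('C(j.*2, j) * \sum_(0 <= k < n) (4 * k + 3) * 'C(k, j) ^ 2)%N%:R
  = (j.+1 * 'C(n, j.+1))%N%:R * bin_sum_cofactor n :> int.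
Proof.
elim: n => [|n IHn]; first by rewrite big_geq // muln0 bin0n muln0 mul0r.
rewrite big_nat_recr //= mulnDr natrD IHn -(mul_bin_diag n.+1 j) mul_bin_leftZ.
rewrite succnK [(n.+1 * _)%N]mulnC (natrM _ 'C(n, j) n.+1) -mulrA.
rewrite -[n.+1%:R * _](subrK ((n%:R - j%:R) * bin_sum_cofactor n)).
rewrite bin_sum_cofactor_rec expnS expn1 !natrM; ring.
Qed.

End AlternatingSum.

End BinomialSums.

Lemma big_nat_widen0l (F : nat -> nat) (j n : nat) :
  (forall k, k < j -> F k = 0) ->
  \sum_(j <= k < n) F k = \sum_(0 <= k < n) F k.
Proof.
move=> F0; have [le_jn | lt_nj] := leqP j n.
  have sumF0 : \sum_(0 <= k < j) F k = 0.
    by apply: big1_seq => k; rewrite mem_index_iota => /andP[_ /F0].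
  by rewrite (big_cat_nat (leq0n j) le_jn) /= sumF0.
rewrite big_geq ?(ltnW lt_nj) // big1_seq // => k.
by rewrite mem_index_iota => /andP[_ lt_kn]; apply/F0/(ltn_trans lt_kn).
Qed.

Theorem mainTheorem10 (n j : nat) (hn : 0 < n) :
  n %| 'C(j.*2, j) * \sum_(j <= k < n) (4 * k + 3) * 'C(k, j) ^ 2.
Proof.
rewrite big_nat_widen0l => [|k lt_kj]; last by rewrite bin_small // muln0.
have := sum_bin_sqr_factorZ j n; rewrite -(mul_bin_diag n j) => factorE.
set s := (_ * _)%N in factorE *.
rewrite -(absz_nat n) -(absz_nat s) -dvdzE; apply/dvdzP.
exists ('C(n.-1, j)%:Z * bin_sum_cofactor j n)%R.
by rewrite -!natz factorE natrM; ring.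
Qed.
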